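(* Let $A\in\mathbb{C}^{n\times n}$ with $k=\mathrm{Ind}(A)$, and let $m\in\mathbb{N}=\{1,2,\dots\}$. Then: (a) $A^{\#_m}=(A^{\mathrm{cEP}})^{m+1}A^mP_{A^m}$; (b) $A^{\#_m}=(A^{\mathrm{WG}})^mA^{m-1}P_{A^m}$; (c) $AA^{\#_m}=(A^{\mathrm{cEP}})^mA^mP_{A^m}=A^{\mathrm{WG}_{m-1}}AP_{A^m}$; (d) $A^{\#_m}A=(A^{\mathrm{cEP}})^{m+1}A^mP_{A^m}A$; (e) $A^{\#_m}A^m=A^{\mathrm{WG}_m}A^m=(A^{\mathrm{cEP}})^{m+1}A^{2m}$; (f) for every $Y\in\mathbb{C}^{n\times n}$ with $YAY=Y$ and $\mathcal{R}(Y)=\mathcal{R}(A^k)$, one has $A^{\#_m}=YAA^{\#_m}$.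
   Context: For $A\in\mathbb{C}^{n\times n}$: $A^\dagger$ is the Moore–Penrose inverse, $\mathcal{R}(\cdot)$ and $\mathcal{N}(\cdot)$ denote column space and null space, $P_A=AA^\dagger$, and $A^0=I_n$. The index $\mathrm{Ind}(A)$ is the smallest nonnegative integer $k$ with $\mathcal{R}(A^k)=\mathcal{R}(A^{k+1})$. The core-EP inverse $A^{\mathrm{cEP}}$ is the unique $X\in\mathbb{C}^{n\times n}$ with $XAX=X$ and $\mathcal{R}(X)=\mathcal{R}(X^* )=\mathcal{R}(A^k)$, $k=\mathrm{Ind}(A)$. For an integer $j\ge 0$, the $j$-weak group inverse is $A^{\mathrm{WG}_j}:=(A^{\mathrm{cEP}})^{j+1}A^j$; the WG inverse is $A^{\mathrm{WG}}:=A^{\mathrm{WG}_1}=(A^{\mathrm{cEP}})^2A$. For $m\in\mathbb{N}$, the $m$-weak core inverse of $A$ is $A^{\#_m}:=A^{\mathrm{WG}_m}P_{A^m}$. *)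

From HB Require Import structures.
From mathcomp Require Import all_boot all_order all_algebra all_field.
From Stdlib Require Import ClassicalEpsilon.
Set Implicit Arguments. Unset Strict Implicit. Unset Printing Implicit Defensive.
Import GRing.Theory Num.Theory.
Local Open Scope ring_scope.

(* Complex n x n matrices are modelled over algC (algebraic complex numbers),
   an algebraically closed numeric field with complex conjugation. *)

Definition ctr n (A : 'M[algC]_n) : 'M[algC]_n := (map_mx Num.conj A)^T.

(* column-space equality R(A) = R(B) (column spaces = row spaces of transposes) *)
Definition colsp_eq n (A B : 'M[algC]_n) : Prop := (A^T == B^T)%MS.

Definition is_MP n (A X : 'M[algC]_n) : Prop :=
  [/\ A *m X *m A = A, X *m A *m X = X,
      ctr (A *m X) = A *m X & ctr (X *m A) = X *m A].

Definition mp n (A : 'M[algC]_n) : 'M[algC]_n :=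
  epsilon (inhabits 0) (fun X => is_MP A X).

Definition P n (A : 'M[algC]_n) : 'M[algC]_n := A *m mp A.

Definition is_index n (A : 'M[algC]_n) (k : nat) : Prop :=
  colsp_eq (A ^+ k) (A ^+ k.+1) /\
  (forall j : nat, (j < k)%N -> ~ colsp_eq (A ^+ j) (A ^+ j.+1)).

Definition Ind n (A : 'M[algC]_n) : nat :=
  epsilon (inhabits 0%N) (fun k => is_index A k).

Definition is_cEP n (A X : 'M[algC]_n) : Prop :=
  [/\ X *m A *m X = X, colsp_eq X (A ^+ Ind A) & colsp_eq (ctr X) (A ^+ Ind A)].

Definition cEP n (A : 'M[algC]_n) : 'M[algC]_n :=
  epsilon (inhabits 0) (fun X => is_cEP A X).

Definition WGj n (j : nat) (A : 'M[algC]_n) : 'M[algC]_n :=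
  cEP A ^+ j.+1 *m A ^+ j.

Definition WG n (A : 'M[algC]_n) : 'M[algC]_n := WGj 1 A.

Definition wcore n (m : nat) (A : 'M[algC]_n) : 'M[algC]_n :=
  WGj m A *m P (A ^+ m).

From mathcomp Require Import all_boot all_order all_algebra all_field.
From mathcomp Require Import sesquilinear spectral.
From Stdlib Require Import ClassicalEpsilon.
Set Implicit Arguments. Unset Strict Implicit. Unset Printing Implicit Defensive.
Import GRing.Theory Num.Theory.
Local Open Scope ring_scope.
Local Open Scope sesquilinear_scope.

(* Write X for the core-EP inverse of A and k for the index. Since X A X = X and
   R(X) = R(A^k), the range of A X lies in R(A^k) and has rank at least
   rank (X A X) = rank A^k, so the idempotent A X fixes X: A X^2 = X. Hence
   A X^(j+2) = X^(j+1) and (X^2 A)^(j+1) = X^(j+2) A, and with P_(A^m) A^m = A^m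
   parts (a)-(e) are rewriting. For (f), Y A fixes R(Y) = R(A^k), which contains
   R(X), and A^(#_m) = X Z for some Z.
   The Moore-Penrose inverse of a full-rank factorization F G is
   G^* (G G^* )^-1 (F^* F)^-1 F^*, and A^k (A^(k+1))^+ satisfies the core-EP
   conditions. *)

Section ConjugateTranspose.
Variable C : numClosedFieldType.

Lemma trmxC_mul p q r (A : 'M[C]_(p, q)) (B : 'M_(q, r)) :
  (A *m B) ^t* = B ^t* *m A ^t*.
Proof. by rewrite trmx_mul map_mxM. Qed.

Lemma trmxC_inv p (A : 'M[C]_p) : (invmx A) ^t* = invmx (A ^t*).
Proof. by rewrite trmx_inv map_invmx. Qed.

Lemma mxrank_trmxC p q (A : 'M[C]_(p, q)) : \rank (A ^t*) = \rank A.
Proof. by rewrite mxrank_map mxrank_tr. Qed.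

Lemma mulmx_trmxC_eq0 p q (A : 'M[C]_(p, q)) : (A *m A ^t* == 0) = (A == 0).
Proof.
apply/eqP/eqP => [AAt0|->]; last by rewrite mul0mx.
apply/row_matrixP => i; rewrite row0; apply/eqP.
rewrite -(dnorm_eq0 (@dotmx C q)) [X in X == 0]dotmxE.
have AAii : (A *m A ^t*) i i = 0 by rewrite AAt0 mxE.
by rewrite -AAii !mxE; apply/eqP/eq_bigr => k _; rewrite !mxE.
Qed.

Lemma mxrank_mul_trmxC p q (A : 'M[C]_(p, q)) : \rank (A *m A ^t*) = \rank A.
Proof.
apply/eqP; rewrite eqn_leq mxrankM_maxl -(leq_sub2lE _ (rank_leq_row A)).
rewrite -!mxrank_ker mxrankS //; apply/sub_kermxP/eqP.
rewrite -mulmx_trmxC_eq0 trmxC_mul mulmxA -(mulmxA _ A) mulmx_ker.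
by rewrite mul0mx.
Qed.

Lemma mul_trmxC_unit p q (A : 'M[C]_(p, q)) :
  row_free A -> A *m A ^t* \in unitmx.
Proof. by rewrite -row_free_unit /row_free mxrank_mul_trmxC. Qed.

Lemma trmxC_mul_unit p q (A : 'M[C]_(p, q)) :
  row_full A -> A ^t* *m A \in unitmx.
Proof.
move=> fullA; rewrite -{2}(trmxCK A) mul_trmxC_unit //.
by rewrite /row_free mxrank_trmxC.
Qed.

End ConjugateTranspose.

Lemma ctrE n (A : 'M[algC]_n) : ctr A = A ^t*.
Proof. by rewrite /ctr map_trmx. Qed.

Lemma is_MP_full_rank_factor n r (F : 'M[algC]_(n, r)) (G : 'M_(r, n)) :
  row_full F -> row_free G ->
  is_MP (F *m G) (G ^t* *m invmx (G *m G ^t*) *m invmx (F ^t* *m F) *m F ^t*).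
Proof.
move=> /trmxC_mul_unit uV /mul_trmxC_unit uU.
set U := G *m G ^t* in uU *; set V := F ^t* *m F in uV *.
have hermU : U ^t* = U by rewrite trmxC_mul trmxCK.
have hermV : V ^t* = V by rewrite trmxC_mul trmxCK.
set X := G ^t* *m _ *m _ *m _.
have AXE : F *m G *m X = F *m invmx V *m F ^t*.
  by rewrite !mulmxA -(mulmxA F G) -/U -(mulmxA F U) mulmxV // mulmx1.
have XAE : X *m (F *m G) = G ^t* *m invmx U *m G.
  rewrite !mulmxA -[_ *m F ^t* *m F]mulmxA -/V.
  by rewrite -[_ *m invmx V *m V]mulmxA mulVmx // mulmx1.
split.
- rewrite AXE -!mulmxA [F ^t* *m _]mulmxA -/V.
  by rewrite (mulmxA (invmx V)) mulVmx // mul1mx.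
- rewrite XAE !mulmxA -[_ *m G *m G ^t*]mulmxA -/U.
  by rewrite -[G ^t* *m invmx U *m U]mulmxA mulVmx // mulmx1.
- by rewrite ctrE AXE !trmxC_mul trmxCK trmxC_inv hermV mulmxA.
- by rewrite ctrE XAE !trmxC_mul trmxCK trmxC_inv hermU mulmxA.
Qed.

Lemma mpP n (A : 'M[algC]_n) : is_MP A (mp A).
Proof.
have := is_MP_full_rank_factor (col_base_full A) (row_base_free A).
rewrite mulmx_base => MP_A.
exact: epsilon_spec (ex_intro _ _ MP_A).
Qed.

Lemma P_mulmx n (A : 'M[algC]_n) : P A *m A = A.
Proof. by case: (mpP A). Qed.

Lemma expr_sqr_mul_outer (R : pzRingType) (x a : R) j :
  x * a * x = x -> (x ^+ 2 * a) ^+ j.+1 = x ^+ j.+2 * a.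
Proof.
move=> xax; have xnax k : x ^+ k.+1 * a * x = x ^+ k.+1.
  by rewrite exprSr -!mulrA (mulrA x) xax.
elim: j => [|j IHj]; first by rewrite expr1.
by rewrite exprSr IHj expr2 !mulrA xnax -exprSr.
Qed.

Section ColumnSpace.
Variable F : fieldType.

Lemma col_subP p q r (M : 'M[F]_(p, q)) (N : 'M_(p, r)) :
  reflect (exists W, M = N *m W) (M^T <= N^T)%MS.
Proof.
apply: (iffP submxP) => [[D MTE]|[W ->]].
  by exists D^T; rewrite -[M]trmxK MTE trmx_mul trmxK.
by exists W^T; rewrite trmx_mul.
Qed.

Lemma col_sub_mulmx p q r (N : 'M[F]_(p, q)) (W : 'M_(q, r)) :
  ((N *m W)^T <= N^T)%MS.
Proof. by rewrite trmx_mul submxMl. Qed.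

Lemma col_sub_exprS n (A : 'M[F]_n) j : ((A ^+ j.+1)^T <= (A ^+ j)^T)%MS.
Proof. by rewrite exprSr -mulmxE col_sub_mulmx. Qed.

Lemma outer_inverse_mulmx_range p q r (Y : 'M[F]_(p, q)) (A : 'M_(q, p))
    (Z : 'M_(p, r)) :
  Y *m A *m Y = Y -> (Z^T <= Y^T)%MS -> Y *m A *m Z = Z.
Proof. by move=> YAY /col_subP[W ->]; rewrite mulmxA YAY. Qed.

End ColumnSpace.

Lemma colsp_eq_rank n (M N : 'M[algC]_n) : colsp_eq M N -> \rank M = \rank N.
Proof. by move/eqmx_rank; rewrite !mxrank_tr. Qed.

Lemma colsp_eq_sub_rank n (M N : 'M[algC]_n) :
  (M^T <= N^T)%MS -> (\rank N <= \rank M)%N -> colsp_eq M N.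
Proof.
move=> subMN rankNM; apply/andP; split => //.
by rewrite -(geq_leqif (mxrank_leqif_sup subMN)) !mxrank_tr.
Qed.

Lemma colsp_eq_exprS_exists n (A : 'M[algC]_n) :
  exists k, colsp_eq (A ^+ k) (A ^+ k.+1).
Proof.
apply: NNPP => no_index.
suff rank_drop j : (\rank (A ^+ j) + j <= n)%N.
  by have := rank_drop n.+1; rewrite addnS ltnNge leq_addl.
elim: j => [|j IHj]; first by rewrite expr0 addn0 rank_leq_row.
rewrite addnS; apply: leq_trans IHj; rewrite ltn_add2r -!(mxrank_tr (A ^+ _)).
rewrite (ltn_leqif (mxrank_leqif_sup (col_sub_exprS A j))).
apply/negP => subj; apply: no_index; exists j.
by apply/andP; split; last exact: col_sub_exprS.
Qed.

Lemma Ind_spec n (A : 'M[algC]_n) : is_index A (Ind A).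
Proof.
have [k k_idx k_min] := ex_minnP (colsp_eq_exprS_exists A).
apply: epsilon_spec; exists k; split => // j j_lt_k j_idx.
by have := k_min j j_idx; rewrite leqNgt j_lt_k.
Qed.

Section CoreEP.
Variables (n : nat) (A : 'M[algC]_n).

Lemma is_cEP_mp : is_cEP A (A ^+ Ind A *m mp (A ^+ (Ind A).+1)).
Proof.
have [colsp_k _] := Ind_spec A.
set k := Ind A in colsp_k *; set B := A ^+ k in colsp_k *.
have ABE : A ^+ k.+1 = A *m B by rewrite exprS mulmxE.
have BAE : A ^+ k.+1 = B *m A by rewrite exprSr mulmxE.
set C := A ^+ k.+1 in colsp_k ABE BAE *.
have [CDC DCD hermCD _] := mpP C; set D := mp C in CDC DCD hermCD *.
have rank_BD : (\rank B <= \rank (B *m D))%N.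
  rewrite (colsp_eq_rank colsp_k) -{1}CDC.
  apply: leq_trans (mxrankM_maxl _ _) _.
  by rewrite ABE -mulmxA mxrankM_maxr.
split.
- by rewrite -!mulmxA (mulmxA A) -ABE (mulmxA D) DCD.
- exact: colsp_eq_sub_rank (col_sub_mulmx _ _) rank_BD.
- (* C D is Hermitian, so D^* = (D C D)^* = C D D^* and R(X^* ) lies in R(C). *)
  have BDE : (B *m D) ^t* = B *m (A *m (D *m D ^t* *m B ^t*)).
    have DtE : D ^t* = C *m (D *m D ^t*).
      by rewrite -{1}DCD -mulmxA trmxC_mul -[(C *m D) ^t*]ctrE hermCD mulmxA.
    by rewrite trmxC_mul {1}DtE BAE -!mulmxA.
  rewrite ctrE; apply: colsp_eq_sub_rank; first by rewrite BDE col_sub_mulmx.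
  by rewrite mxrank_trmxC.
Qed.

Lemma cEP_spec : is_cEP A (cEP A).
Proof. exact: epsilon_spec (ex_intro _ _ is_cEP_mp). Qed.

Lemma mulA_cEP_cEP : A *m cEP A *m cEP A = cEP A.
Proof.
have [XAX colsp_X _] := cEP_spec; set X := cEP A in XAX colsp_X *.
have [subXB _] := andP colsp_X.
have sub_AX : ((A *m X)^T <= (A ^+ Ind A)^T)%MS.
  have /col_subP[W ->] := subXB.
  rewrite mulmxA mulmxE -exprS -mulmxE.
  exact: submx_trans (col_sub_mulmx _ _) (col_sub_exprS _ _).
have rank_AX : (\rank (A ^+ Ind A) <= \rank (A *m X))%N.
  by rewrite -(colsp_eq_rank colsp_X) -{1}XAX -mulmxA mxrankM_maxr.
have [_ sub_BAX] := andP (colsp_eq_sub_rank sub_AX rank_AX).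
have /col_subP[W {2 3}->] := submx_trans subXB sub_BAX.
by rewrite !mulmxA -(mulmxA A X A) -(mulmxA A (X *m A) X) XAX.
Qed.

Lemma mulA_cEP_expSS j : A *m cEP A ^+ j.+2 = cEP A ^+ j.+1.
Proof.
by have := mulA_cEP_cEP; rewrite !exprS !mulmxE !mulrA => ->.
Qed.

Lemma outer_inverse_mul_cEP (Y : 'M[algC]_n) :
  Y *m A *m Y = Y -> colsp_eq Y (A ^+ Ind A) -> Y *m A *m cEP A = cEP A.
Proof.
have [_ /andP[subXB _] _] := cEP_spec.
move=> YAY /andP[_ subBY].
exact: outer_inverse_mulmx_range YAY (submx_trans subXB subBY).
Qed.

End CoreEP.

Theorem theorem4p5 (n : nat) (A : 'M[algC]_n) (m : nat) (hm : (0 < m)%N) :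
  (* (a) *)
  (
      wcore m A = cEP A ^+ m.+1 *m A ^+ m *m P (A ^+ m)) /\
      (* (b) *)
  (
      wcore m A = WG A ^+ m *m A ^+ m.-1 *m P (A ^+ m)) /\
      (* (c) *)
  (
      A *m wcore m A = cEP A ^+ m *m A ^+ m *m P (A ^+ m) /\
      cEP A ^+ m *m A ^+ m *m P (A ^+ m) = WGj m.-1 A *m A *m P (A ^+ m)) /\
      (* (d) *)
  (
      wcore m A *m A = cEP A ^+ m.+1 *m A ^+ m *m P (A ^+ m) *m A) /\
      (* (e) *)
  (
      wcore m A *m A ^+ m = WGj m A *m A ^+ m /\
      WGj m A *m A ^+ m = cEP A ^+ m.+1 *m A ^+ (2 * m)) /\
    (* (f) *)
  (
      forall Y : 'M[algC]_n,
        Y *m A *m Y = Y -> colsp_eq Y (A ^+ Ind A) ->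
        wcore m A = Y *m A *m wcore m A).
Proof.
have [XAX _ _] := cEP_spec A.
have AXX := mulA_cEP_expSS A.
have PAA := P_mulmx (A ^+ m).
have YAX := outer_inverse_mul_cEP (A := A).
rewrite /wcore /WG /WGj /P !mulmxE in XAX AXX PAA YAX *.
set X := cEP A in XAX AXX YAX *; set M := mp (A ^+ m) in PAA *.
case: m hm M PAA => // m _ M PAA; rewrite succnK.
split=> //; split.
  by rewrite expr1 expr_sqr_mul_outer // -(mulrA _ A) -exprS.
split; first split.
- by rewrite -(AXX m) mulrA (mulrA A).
- by rewrite -(mulrA _ (A ^+ m)) -exprSr.
split=> //; split; first split.
- by rewrite -!mulrA (mulrA (A ^+ m.+1) M) PAA.
- by rewrite -mulrA -exprD mul2n addnn.
move=> Y YAY /(YAX _ YAY) {}YAX.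
by rewrite exprS !mulrA YAX.
Qed.
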